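(* Let $S\subset\mathbb{P}^3$ be the cubic surface $t_1t_2(t_1+t_2)=t_3^2t_4$, and let $U\subset S$ be the open subset obtained by deleting the six lines $t_i=t_j=0$ and $t_j=t_1+t_2=0$ for $i\in\{1,2\}$, $j\in\{3,4\}$. Let $N_U(B)=\#\{x\in U(\mathbb{Q}):H(x)\leq B\}$. For $v\in\mathbb{R}$ and $\mathbf{s},\mathbf{u},\mathbf{y}\in\mathbb{R}^3$ define $$\Psi(v,\mathbf{s},\mathbf{u},\mathbf{y})=\max\{|s_1s_2s_3|,\ |u_1^2u_2^2u_3^2v^3y_1y_2y_3|,\ |s_1u_1^2u_2u_3v^2y_1^2|,\ |s_2u_1u_2^2u_3v^2y_2^2|\}.$$ Then $N_U(B)$ equals $2$ times the number of $(v,\mathbf{s},\mathbf{u},\mathbf{y})$ with $v\in\mathbb{N}$, $\mathbf{s}=(s_1,s_2,s_3)\in\mathbb{N}^3$, $\mathbf{u}=(u_1,u_2,u_3)\in\mathbb{Z}^3$, $\mathbf{y}=(y_1,y_2,y_3)\in\mathbb{N}^3$ such that $$u_3>0,\quad \Psi(v,\mathbf{s},\mathbf{u},\mathbf{y})\leq B,\quad s_1u_1y_1^2+s_2u_2y_2^2+s_3u_3y_3^2=0,$$ $$|\mu(u_1u_2u_3)|=1,\quad \gcd(s_1s_2s_3,u_1u_2u_3v)=1,\quad \gcd(y_i,y_j)=1,\quad \gcd(y_i,s_j,s_k)=1,$$ where $i,j,k$ denote distinct elements of $\{1,2,3\}$.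
   Context: For $x\in\mathbb{P}^{3}(\mathbb{Q})$ written as $x=[\mathbf{t}]$ with $\mathbf{t}\in\mathbb{Z}^4$ primitive, $H(x)=\max_i|t_i|$. $\mathbb{N}=\{1,2,3,\dots\}$ and $\mu$ is the Möbius function (so $|\mu(n)|=1$ means $n$ is square-free). *)

From HB Require Import structures.
From mathcomp Require Import all_boot all_order all_algebra.
From mathcomp Require Import finmap boolp classical_sets functions cardinality reals.
Set Implicit Arguments. Unset Strict Implicit. Unset Printing Implicit Defensive.
Import Order.TTheory GRing.Theory Num.Theory.
Local Open Scope ring_scope.

Definition mobius (n : nat) : int :=
  if n == 0%N then 0
  else if all (fun p => ~~ (p * p %| n)%N) (primes n)
       then (-1) ^+ size (primes n) else 0.

Definition mobiusz (n : int) : int := mobius `|n|%N.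

(* Points of P^3(Q): each point is represented by its unique primitive
   integer vector (t1,t2,t3,t4) whose first nonzero coordinate is positive. *)
Definition pt := (int * int * int * int)%type.

Definition primitive4 (t : pt) : bool :=
  let '(a, b, c, d) := t in gcdz a (gcdz b (gcdz c d)) == 1%N.

Definition first_nonzero_pos (t : pt) : bool :=
  let '(a, b, c, d) := t in
  (0 < a) || ((a == 0) && ((0 < b) || ((b == 0) && ((0 < c) || ((c == 0) && (0 < d)))))).

Definition projrep (t : pt) : bool := primitive4 t && first_nonzero_pos t.

Definition height (t : pt) : int :=
  let '(a, b, c, d) := t in
  Num.max `|a| (Num.max `|b| (Num.max `|c| `|d|)).

Definition onS (t : pt) : bool :=
  let '(a, b, c, d) := t in a * b * (a + b) == c ^+ 2 * d.

Definition on_lines (t : pt) : bool :=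
  let '(a, b, c, d) := t in
  [|| (a == 0) && (c == 0), (a == 0) && (d == 0), (b == 0) && (c == 0),
      (b == 0) && (d == 0), (c == 0) && (a + b == 0) | (d == 0) && (a + b == 0)].

Definition inU (t : pt) : bool := onS t && ~~ on_lines t.

Definition NU_set (R : realType) (B : R) : set pt :=
  [set t | projrep t /\ inU t /\ (height t)%:~R <= B].

Definition int3 := (int * int * int)%type.
Definition param := (int * int3 * int3 * int3)%type.

Definition Psi (v : int) (s u y : int3) : int :=
  let '(s1, s2, s3) := s in let '(u1, u2, u3) := u in let '(y1, y2, y3) := y in
  Num.max `|s1 * s2 * s3|
    (Num.max `|u1 ^+ 2 * u2 ^+ 2 * u3 ^+ 2 * v ^+ 3 * y1 * y2 * y3|
      (Num.max `|s1 * u1 ^+ 2 * u2 * u3 * v ^+ 2 * y1 ^+ 2|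
               `|s2 * u1 * u2 ^+ 2 * u3 * v ^+ 2 * y2 ^+ 2|)).

Definition param_ok (R : realType) (B : R) (p : param) : Prop :=
  let '(v, s, u, y) := p in
  let '(s1, s2, s3) := s in let '(u1, u2, u3) := u in let '(y1, y2, y3) := y in
  [/\ 0 < v, [/\ 0 < s1, 0 < s2 & 0 < s3], 0 < u3, [/\ 0 < y1, 0 < y2 & 0 < y3] &
   [/\ (Psi v s u y)%:~R <= B,
       s1 * u1 * y1 ^+ 2 + s2 * u2 * y2 ^+ 2 + s3 * u3 * y3 ^+ 2 = 0,
       `|mobiusz (u1 * u2 * u3)| = 1,
       gcdz (s1 * s2 * s3) (u1 * u2 * u3 * v) = 1%N &
       [/\ [/\ gcdz y1 y2 = 1%N, gcdz y1 y3 = 1%N & gcdz y2 y3 = 1%N] &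
           [/\ gcdz y1 (gcdz s2 s3) = 1%N, gcdz y2 (gcdz s1 s3) = 1%N
             & gcdz y3 (gcdz s1 s2) = 1%N]]]].

Definition param_set (R : realType) (B : R) : set param := [set p | param_ok B p].

From HB Require Import structures.
From mathcomp Require Import all_boot all_order all_algebra.
From mathcomp Require Import finmap boolp classical_sets functions cardinality reals.
From mathcomp Require Import zify ring.
Set Implicit Arguments. Unset Strict Implicit. Unset Printing Implicit Defensive.
Import Order.TTheory GRing.Theory Num.Theory.

(* A point of U is, up to sign, a primitive integer vector t with
   t1 t2 (t1 + t2) = t3^2 t4 and t1 t2 t3 t4 (t1 + t2) <> 0; we normalise t4 < 0 and
   put t5 = - (t1 + t2).  At every prime p the valuations of t1, t2, t5 are
   ultrametric (the two smallest agree), they add up to 2 v_p(t3) + v_p(t4), and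
   primitivity makes one of v_p(t1), v_p(t2), v_p(t3), v_p(t4) vanish.  Such
   valuation vectors correspond bijectively to the exponents of p in (v, s, u, y)
   subject to the local form of the coprimality conditions, through
     t1 = s1 u1^2 u2 u3 v^2 y1^2,  t2 = s2 u1 u2^2 u3 v^2 y2^2,
     t5 = s3 u1 u2 u3^2 v^2 y3^2,  |t3| = u1^2 u2^2 u3^2 v^3 y1 y2 y3,  t4 = - s1 s2 s3.
   Gluing the local inverses over all primes inverts the parametrisation up to
   signs; u1 and u2 take the signs of t2 and t1, t1 + t2 + t5 = 0 becomes the conic
   s1 u1 y1^2 + s2 u2 y2^2 + s3 u3 y3^2 = 0, and the free sign of t3 gives the
   factor 2. *)

(** * Valuations *)

Lemma eq_from_logn_prime m n : 0 < m -> 0 < n ->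
  (forall p, prime p -> logn p m = logn p n) -> m = n.
Proof.
move=> m0 n0 H; apply: eqn_from_log => // p.
by case pp: (prime p); [exact: H | rewrite /logn pp].
Qed.

Lemma logn_small q n : 0 < n < q -> logn q n = 0.
Proof.
case/andP=> n0 nq; apply/eqP; rewrite -leqn0 leqNgt logn_gt0 mem_primes.
by apply/negP => /and3P[_ _ /(dvdn_leq n0)]; rewrite leqNgt nq.
Qed.

Lemma gcdn_eq1_logn a b : 0 < a -> 0 < b ->
  gcdn a b = 1 <-> (forall p, prime p -> logn p a = 0 \/ logn p b = 0).
Proof.
move=> a0 b0; split=> [g1 p pp | H].
  by have := logn_gcd p a0 b0; rewrite g1 logn1; lia.
apply: eq_from_logn_prime => [|//|p pp]; first by rewrite gcdn_gt0 a0.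
by rewrite logn_gcd // logn1; have := H p pp; lia.
Qed.

Lemma gcdn3_eq1_logn a b c : 0 < a -> 0 < b -> 0 < c ->
  gcdn a (gcdn b c) = 1 <->
  (forall p, prime p -> logn p a = 0 \/ logn p b = 0 \/ logn p c = 0).
Proof.
move=> a0 b0 c0; have bc0 : 0 < gcdn b c by rewrite gcdn_gt0 b0.
rewrite gcdn_eq1_logn //; split=> H p pp; have := H p pp; rewrite logn_gcd //; lia.
Qed.

Lemma gcdn4_eq1_logn a b c d : 0 < a -> 0 < b -> 0 < c -> 0 < d ->
  gcdn a (gcdn b (gcdn c d)) = 1 <->
  (forall p, prime p -> logn p a = 0 \/ logn p b = 0 \/ logn p c = 0 \/ logn p d = 0).
Proof.
move=> a0 b0 c0 d0; have cd0 : 0 < gcdn c d by rewrite gcdn_gt0 c0.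
rewrite gcdn3_eq1_logn //; split=> H p pp; have := H p pp; rewrite logn_gcd //; lia.
Qed.

Lemma norm_mobius_eq1 n :
  @eq int `|mobius n|%R 1%R <-> 0 < n /\ (forall p, prime p -> logn p n <= 1).
Proof.
rewrite /mobius; case: (posnP n) => [->|n0]; first by split; [rewrite normr0 | case].
split.
  case: ifP => [/allP H _|]; last by rewrite normr0.
  split=> // p pp; case: (posnP (logn p n)) => [->//|].
  rewrite logn_gt0 => pn; have := H p pn.
  by rewrite mulnn pfactor_dvdn //; lia.
case=> _ H; case: ifP => [_|/negP[]]; first by rewrite normrX normrN1 expr1n.
apply/allP => p pn; have pp : prime p by move: pn; rewrite mem_primes => /andP[].
by rewrite mulnn pfactor_dvdn //; have := H p pp; lia.
Qed.

Definition prime_prod (K : nat) (f : nat -> nat) : nat :=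
  \prod_(p < K) (if prime p then p ^ f p else 1).

Lemma prime_prod_gt0 K f : 0 < prime_prod K f.
Proof.
rewrite /prime_prod; elim/big_ind: _ => // [a b|i _]; first by rewrite muln_gt0 => ->.
by case: ifP => // /prime_gt0 p0; rewrite expn_gt0 p0.
Qed.

Lemma logn_prime_prod q K f : prime q ->
  logn q (prime_prod K f) = if q < K then f q else 0.
Proof.
move=> pq; elim: K => [|K IH]; first by rewrite /prime_prod big_ord0 logn1.
rewrite /prime_prod big_ord_recr /= -/(prime_prod K f) lognM ?prime_prod_gt0 //;
  last by case: ifP => // /prime_gt0 p0; rewrite expn_gt0 p0.
have pow_log : logn q (if prime K then K ^ f K else 1) = if q == K then f q else 0.
  case: ifP => pK; last by rewrite logn1; case: eqP => // qK; rewrite -qK pq in pK.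
  by rewrite lognX logn_prime //; case: eqP => [->|_]; rewrite ?muln1 ?muln0.
rewrite IH pow_log ltnS.
by case: (ltngtP q K); rewrite ?addn0.
Qed.

(** * The problem at a single prime *)

Record nparam := NParam
  { nv : nat; ns1 : nat; ns2 : nat; ns3 : nat; nu1 : nat; nu2 : nat; nu3 : nat;
    ny1 : nat; ny2 : nat; ny3 : nat }.

Definition nmap (f : nat -> nat) (d : nparam) : nparam :=
  let: NParam v s1 s2 s3 u1 u2 u3 y1 y2 y3 := d in
  NParam (f v) (f s1) (f s2) (f s3) (f u1) (f u2) (f u3) (f y1) (f y2) (f y3).

Definition npos (d : nparam) : Prop :=
  let: NParam v s1 s2 s3 u1 u2 u3 y1 y2 y3 := d in
  [/\ 0 < v, [/\ 0 < s1, 0 < s2 & 0 < s3], [/\ 0 < u1, 0 < u2 & 0 < u3] &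
      [/\ 0 < y1, 0 < y2 & 0 < y3]].

Lemma nparam_eq_logn d d' : npos d -> npos d' ->
  (forall p, prime p -> nmap (logn p) d = nmap (logn p) d') -> d = d'.
Proof.
case: d => ? ? ? ? ? ? ? ? ? ?; case: d' => ? ? ? ? ? ? ? ? ? ?.
move=> [? [? ? ?] [? ? ?] [? ? ?]] [? [? ? ?] [? ? ?] [? ? ?]] H.
by congr NParam; apply: eq_from_logn_prime => // p /H [].
Qed.

Definition nt1 (d : nparam) := let: NParam v s1 _ _ u1 u2 u3 y1 _ _ := d in
  s1 * u1 ^ 2 * u2 * u3 * v ^ 2 * y1 ^ 2.
Definition nt2 (d : nparam) := let: NParam v _ s2 _ u1 u2 u3 _ y2 _ := d in
  s2 * u1 * u2 ^ 2 * u3 * v ^ 2 * y2 ^ 2.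
Definition nt5 (d : nparam) := let: NParam v _ _ s3 u1 u2 u3 _ _ y3 := d in
  s3 * u1 * u2 * u3 ^ 2 * v ^ 2 * y3 ^ 2.
Definition nt3 (d : nparam) := let: NParam v _ _ _ u1 u2 u3 y1 y2 y3 := d in
  u1 ^ 2 * u2 ^ 2 * u3 ^ 2 * v ^ 3 * y1 * y2 * y3.
Definition nt4 (d : nparam) := let: NParam _ s1 s2 s3 _ _ _ _ _ _ := d in s1 * s2 * s3.

(* The exponents x1, x2, x5, c, e of p in |t1|, |t2|, |t5|, |t3|, |t4| when d holds
   those of p in the parameters. *)
Definition local_val (d : nparam) (x1 x2 x5 c e : nat) : Prop :=
  let: NParam v s1 s2 s3 u1 u2 u3 y1 y2 y3 := d in
  [/\ x1 = s1 + u1 + (u1 + u2 + u3) + 2 * v + 2 * y1,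
      x2 = s2 + u2 + (u1 + u2 + u3) + 2 * v + 2 * y2,
      x5 = s3 + u3 + (u1 + u2 + u3) + 2 * v + 2 * y3,
      c = 2 * (u1 + u2 + u3) + 3 * v + y1 + y2 + y3 &
      e = s1 + s2 + s3].

(* The coprimality conditions on (v, s, u, y), read at a single prime. *)
Definition local_ok (d : nparam) : Prop :=
  let: NParam v s1 s2 s3 u1 u2 u3 y1 y2 y3 := d in
  [/\ u1 + u2 + u3 <= 1, s1 + s2 + s3 = 0 \/ u1 + u2 + u3 + v = 0,
      [/\ y1 = 0 \/ y2 = 0, y1 = 0 \/ y3 = 0 & y2 = 0 \/ y3 = 0] &
      [/\ y1 = 0 \/ s2 = 0 \/ s3 = 0, y2 = 0 \/ s1 = 0 \/ s3 = 0
        & y3 = 0 \/ s1 = 0 \/ s2 = 0]].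

Definition ultra3 (x1 x2 x5 : nat) : Prop :=
  [/\ minn x1 x2 <= x5, minn x2 x5 <= x1 & minn x1 x5 <= x2].

(* If p does not divide t4 (e = 0), then min(x1, x2, x5) = (u1 + u2 + u3) + 2 v
   with u1 + u2 + u3 <= 1; otherwise u = v = 0, x_i = s_i + 2 y_i and
   y_i = min(c, x_i / 2). *)
Definition local_decode (x1 x2 x5 c e : nat) : nparam :=
  if e == 0 then
    let m := minn x1 (minn x2 x5) in
    NParam (m %/ 2) 0 0 0 ((x1 - m) %% 2) ((x2 - m) %% 2) ((x5 - m) %% 2)
      ((x1 - m) %/ 2) ((x2 - m) %/ 2) ((x5 - m) %/ 2)
  else
    let y x := minn c (x %/ 2) in
    NParam 0 (x1 - 2 * y x1) (x2 - 2 * y x2) (x5 - 2 * y x5) 0 0 0 (y x1) (y x2) (y x5).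

Lemma local_decodeK d x1 x2 x5 c e : local_ok d -> local_val d x1 x2 x5 c e ->
  ultra3 x1 x2 x5 -> local_decode x1 x2 x5 c e = d.
Proof.
case: d => v s1 s2 s3 u1 u2 u3 y1 y2 y3 /=.
case=> Hu Hs [Hy12 Hy13 Hy23] [Hys1 Hys2 Hys3] [E1 E2 E5 Ec Ee] [U1 U2 U3].
rewrite /local_decode; case: eqP => He.
  have [S1 [S2 S3]] : s1 = 0 /\ s2 = 0 /\ s3 = 0 by clear -He Ee; lia.
  subst s1 s2 s3.
  have -> : minn x1 (minn x2 x5) = (u1 + u2 + u3) + 2 * v.
    by rewrite E1 E2 E5; clear -Hu Hy12 Hy13 Hy23; lia.
  have mod2 u y : u <= 1 -> (u + 2 * y) %% 2 = u by lia.
  have div2 u y : u <= 1 -> (u + 2 * y) %/ 2 = y by lia.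
  have -> : x1 - (u1 + u2 + u3 + 2 * v) = u1 + 2 * y1 by clear -E1; lia.
  have -> : x2 - (u1 + u2 + u3 + 2 * v) = u2 + 2 * y2 by clear -E2; lia.
  have -> : x5 - (u1 + u2 + u3 + 2 * v) = u3 + 2 * y3 by clear -E5; lia.
  have -> : (u1 + u2 + u3 + 2 * v) %/ 2 = v by rewrite (div2 (u1 + u2 + u3)).
  by rewrite !mod2 ?div2 //; clear -Hu; lia.
have [V0 [Z1 [Z2 Z3]]] : v = 0 /\ u1 = 0 /\ u2 = 0 /\ u3 = 0 by clear -Hs He Ee; lia.
subst v u1 u2 u3 c e x1 x2 x5.
have [[Y1 [Y2 Y3]]|[[Y1 [Y2 Y3]]|[[Y1 [Y2 Y3]]|[Y1 [Y2 Y3]]]]] :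
    (y1 = 0 /\ y2 = 0 /\ y3 = 0) \/ (0 < y1 /\ y2 = 0 /\ y3 = 0) \/
    (y1 = 0 /\ 0 < y2 /\ y3 = 0) \/ (y1 = 0 /\ y2 = 0 /\ 0 < y3).
  by clear -Hy12 Hy13 Hy23; lia.
- by rewrite Y1 Y2 Y3; congr NParam; clear -He; lia.
- have [S2 S3] : s2 = 0 /\ s3 = 0 by clear -Hys1 Y1 Y2 Y3 U1 U2 U3; lia.
  by rewrite S2 S3 Y2 Y3; congr NParam; clear -He Y1; lia.
- have [S1 S3] : s1 = 0 /\ s3 = 0 by clear -Hys2 Y1 Y2 Y3 U1 U2 U3; lia.
  by rewrite S1 S3 Y1 Y3; congr NParam; clear -He Y2; lia.
- have [S1 S2] : s1 = 0 /\ s2 = 0 by clear -Hys3 Y1 Y2 Y3 U1 U2 U3; lia.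
  by rewrite S1 S2 Y1 Y2; congr NParam; clear -He Y3; lia.
Qed.

Lemma local_decode_spec x1 x2 x5 c e :
  x1 + x2 + x5 = 2 * c + e -> x1 = 0 \/ x2 = 0 \/ c = 0 \/ e = 0 -> ultra3 x1 x2 x5 ->
  local_ok (local_decode x1 x2 x5 c e) /\ local_val (local_decode x1 x2 x5 c e) x1 x2 x5 c e.
Proof.
move=> Hsum Hg [U1 U2 U3]; rewrite /local_decode; case: eqP => He /=.
  have [[E h]|[[E h]|[E h]]] :
      x1 = x2 /\ x1 <= x5 \/ x1 = x5 /\ x1 <= x2 \/ x2 = x5 /\ x2 <= x1.
    by clear -U1 U2 U3; lia.
  - have -> : minn x1 (minn x2 x5) = x1 by lia.
    by split; first split; try split; lia.
  - have -> : minn x1 (minn x2 x5) = x1 by lia.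
    by split; first split; try split; lia.
  - have -> : minn x1 (minn x2 x5) = x2 by lia.
    by split; first split; try split; lia.
have [C0|Hc] := posnP c.
  by subst c; rewrite !min0n !muln0 !subn0; split; first split; try split; lia.
have [[E1 E2]|[[E1 E2]|[E1 E2]]] :
    x1 = 0 /\ x2 = 0 \/ x1 = 0 /\ x5 = 0 \/ x2 = 0 /\ x5 = 0.
  by clear -Hg Hc He U1 U2 U3; lia.
all: rewrite E1 E2 in Hsum *; rewrite ?div0n ?minn0 ?muln0 ?subn0.
all: have half : minn c ((2 * c + e) %/ 2) = c by clear; lia.
- have -> : x5 = 2 * c + e by lia.
  by rewrite half; split; first split; try split; lia.
- have -> : x2 = 2 * c + e by lia.
  by rewrite half; split; first split; try split; lia.
- have -> : x1 = 2 * c + e by lia.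
  by rewrite half; split; first split; try split; lia.
Qed.

Lemma local_coprime d x1 x2 x5 c e : local_ok d -> local_val d x1 x2 x5 c e ->
  ultra3 x1 x2 x5 -> x1 = 0 \/ x2 = 0 \/ c = 0 \/ e = 0.
Proof.
case: d => v s1 s2 s3 u1 u2 u3 y1 y2 y3 /=.
case=> _ Hs [Hy12 Hy13 Hy23] [Hys1 Hys2 Hys3] [E1 E2 E5 Ec Ee] [U1 U2 U3].
have [He|He] := posnP e; first by right; right; right.
have [V0 [Z1 [Z2 Z3]]] : v = 0 /\ u1 = 0 /\ u2 = 0 /\ u3 = 0 by clear -Hs He Ee; lia.
subst v u1 u2 u3 c e x1 x2 x5.
have [Y1|Y1] := posnP y1; last first.
  by case: Hys1 => [|[]] S; clear -S U1 U2 U3 Y1 Hy12 Hy13; lia.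
have [Y2|Y2] := posnP y2; last first.
  by case: Hys2 => [|[]] S; clear -S U1 U2 U3 Y1 Y2 Hy23; lia.
have [Y3|Y3] := posnP y3; first by clear -Y1 Y2 Y3; lia.
by case: Hys3 => [|[]] S; clear -S U1 U2 U3 Y1 Y2 Y3; lia.
Qed.

(** * Gluing over all primes *)

(* No prime p >= K divides the positive inputs, so cutting the product at K loses
   nothing. *)
Definition decode (P1 P2 P5 T N : nat) : nparam :=
  let K := (P1 + P2 + P5 + T + N).+1 in
  let g (f : nparam -> nat) := prime_prod K (fun p =>
    f (local_decode (logn p P1) (logn p P2) (logn p P5) (logn p T) (logn p N))) in
  NParam (g nv) (g ns1) (g ns2) (g ns3) (g nu1) (g nu2) (g nu3) (g ny1) (g ny2) (g ny3).
Arguments decode : simpl never.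

Lemma decode_pos P1 P2 P5 T N : npos (decode P1 P2 P5 T N).
Proof. by rewrite /decode; split; rewrite ?prime_prod_gt0. Qed.

Lemma logn_decode P1 P2 P5 T N q : prime q ->
  0 < P1 -> 0 < P2 -> 0 < P5 -> 0 < T -> 0 < N ->
  nmap (logn q) (decode P1 P2 P5 T N) =
  local_decode (logn q P1) (logn q P2) (logn q P5) (logn q T) (logn q N).
Proof.
move=> pq h1 h2 h5 h3 hN.
have glue (f : nparam -> nat) : f (local_decode 0 0 0 0 0) = 0 ->
    logn q (prime_prod (P1 + P2 + P5 + T + N).+1 (fun p =>
      f (local_decode (logn p P1) (logn p P2) (logn p P5) (logn p T) (logn p N)))) =
    f (local_decode (logn q P1) (logn q P2) (logn q P5) (logn q T) (logn q N)).
  move=> f0; rewrite logn_prime_prod //; case: ltnP => // Kq.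
  by rewrite !logn_small ?f0 //; lia.
by rewrite /decode /= !glue //; case: local_decode.
Qed.

Lemma npos_nt d : npos d ->
  [/\ 0 < nt1 d, 0 < nt2 d, 0 < nt5 d, 0 < nt3 d & 0 < nt4 d].
Proof.
case: d => v s1 s2 s3 u1 u2 u3 y1 y2 y3 [V0 [S1 S2 S3] [U1 U2 U3] [Y1 Y2 Y3]].
by split; rewrite /= !muln_gt0 ?expn_gt0 ?V0 ?S1 ?S2 ?S3 ?U1 ?U2 ?U3 ?Y1 ?Y2 ?Y3.
Qed.

Lemma logn_nt d p : npos d ->
  local_val (nmap (logn p) d)
    (logn p (nt1 d)) (logn p (nt2 d)) (logn p (nt5 d)) (logn p (nt3 d)) (logn p (nt4 d)).
Proof.
case: d => v s1 s2 s3 u1 u2 u3 y1 y2 y3 [V0 [S1 S2 S3] [U1 U2 U3] [Y1 Y2 Y3]].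
rewrite /= !lognM ?lognX ?muln_gt0 ?expn_gt0 ?V0 ?S1 ?S2 ?S3 ?U1 ?U2 ?U3 ?Y1 ?Y2 ?Y3 //.
by split; lia.
Qed.

Lemma local_val_fun d x1 x2 x5 c e x1' x2' x5' c' e' :
  local_val d x1 x2 x5 c e -> local_val d x1' x2' x5' c' e' ->
  [/\ x1 = x1', x2 = x2', x5 = x5', c = c' & e = e'].
Proof. by case: d => /= ? ? ? ? ? ? ? ? ? ? [-> -> -> -> ->] [-> -> -> -> ->]. Qed.

Definition nparam_ok (d : nparam) : Prop :=
  npos d /\ forall p, prime p -> local_ok (nmap (logn p) d).

Definition ultra (P1 P2 P5 : nat) : Prop :=
  forall p, prime p -> ultra3 (logn p P1) (logn p P2) (logn p P5).

Section EncodeDecode.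
Variable d : nparam.
Hypotheses (dok : nparam_ok d) (dultra : ultra (nt1 d) (nt2 d) (nt5 d)).

Lemma nt_coprime : gcdn (nt1 d) (gcdn (nt2 d) (gcdn (nt3 d) (nt4 d))) = 1.
Proof.
case: dok => dpos dloc; have [t1 t2 t5 t3 t4] := npos_nt dpos.
apply/gcdn4_eq1_logn => // p pp.
exact: local_coprime (dloc p pp) (logn_nt p dpos) (dultra pp).
Qed.

Lemma decode_nt : decode (nt1 d) (nt2 d) (nt5 d) (nt3 d) (nt4 d) = d.
Proof.
case: dok => dpos dloc; have [t1 t2 t5 t3 t4] := npos_nt dpos.
apply: nparam_eq_logn => // [|p pp]; first exact: decode_pos.
rewrite logn_decode //.
exact: local_decodeK (dloc p pp) (logn_nt p dpos) (dultra pp).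
Qed.

End EncodeDecode.

Section DecodeEncode.
Variables P1 P2 P5 T N : nat.
Hypotheses (P1_gt0 : 0 < P1) (P2_gt0 : 0 < P2) (P5_gt0 : 0 < P5) (T_gt0 : 0 < T)
  (N_gt0 : 0 < N) (prodE : P1 * P2 * P5 = T ^ 2 * N)
  (Pcoprime : gcdn P1 (gcdn P2 (gcdn T N)) = 1) (Pultra : ultra P1 P2 P5).
Let d := decode P1 P2 P5 T N.

Lemma decode_local p : prime p ->
  local_ok (nmap (logn p) d) /\
  local_val (nmap (logn p) d) (logn p P1) (logn p P2) (logn p P5) (logn p T) (logn p N).
Proof.
move=> pp; rewrite logn_decode //; apply: local_decode_spec (Pultra pp).
  have := congr1 (logn p) prodE.
  by rewrite !lognM ?lognX ?muln_gt0 ?expn_gt0 ?P1_gt0 ?P2_gt0 ?P5_gt0 ?T_gt0 ?N_gt0 //; lia.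
exact: (proj1 (gcdn4_eq1_logn P1_gt0 P2_gt0 T_gt0 N_gt0) Pcoprime p pp).
Qed.

Lemma decode_ok : nparam_ok d.
Proof. by split=> [|p /decode_local[]//]; apply: decode_pos. Qed.

Lemma nt_decode : [/\ nt1 d = P1, nt2 d = P2, nt5 d = P5, nt3 d = T & nt4 d = N].
Proof.
have dpos := decode_pos P1 P2 P5 T N; have [t1 t2 t5 t3 t4] := npos_nt dpos.
have E p : prime p -> [/\ logn p (nt1 d) = logn p P1, logn p (nt2 d) = logn p P2,
    logn p (nt5 d) = logn p P5, logn p (nt3 d) = logn p T & logn p (nt4 d) = logn p N].
  by move=> pp; apply: local_val_fun (logn_nt p dpos) (decode_local pp).2.
by split; apply: eq_from_logn_prime => // p /E[].
Qed.

End DecodeEncode.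

(** * The parametrisation *)

Local Open Scope ring_scope.

Lemma logn_addz p (a b : int) : prime p -> a != 0 -> b != 0 -> a + b != 0 ->
  (minn (logn p `|a|) (logn p `|b|) <= logn p `|(a + b)%R|)%N.
Proof.
move=> pp a0 b0 ab0; set k := minn _ _.
have dvd_pk (c : int) : c != 0 -> (k <= logn p `|c|)%N -> ((p ^ k)%:Z %| c)%Z.
  by move=> c0 kc; rewrite dvdzE absz_nat pfactor_dvdn // absz_gt0.
have : ((p ^ k)%:Z %| a + b)%Z by rewrite rpredD ?dvd_pk // ?geq_minl ?geq_minr.
by rewrite dvdzE absz_nat pfactor_dvdn // absz_gt0.
Qed.

Lemma ultra_addz (t1 t2 : int) : t1 != 0 -> t2 != 0 -> t1 + t2 != 0 ->
  ultra `|t1| `|t2| `|(t1 + t2)%R|.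
Proof.
move=> h1 h2 h12 p pp; split; first exact: logn_addz.
- have := @logn_addz p (t1 + t2) (- t2) pp h12; rewrite oppr_eq0 abszN addrK minnC.
  exact.
- have := @logn_addz p (t1 + t2) (- t1) pp h12; rewrite oppr_eq0 abszN (addrC t1) addrK.
  by rewrite minnC; apply.
Qed.

Lemma gcdz_eq1 (a b : int) : gcdz a b = 1%N <-> gcdn `|a| `|b| = 1%N.
Proof. by rewrite /gcdz; split=> [[]|->]. Qed.

Lemma sqr_gt0 (R : realDomainType) (x : R) : x != 0 -> 0 < x ^+ 2.
Proof. by move=> x0; rewrite exprn_even_gt0 // x0 orbT. Qed.

Lemma max4_perm (a b c d : int) :
  Num.max a (Num.max b (Num.max c d)) = Num.max d (Num.max c (Num.max a b)).
Proof. by apply/eqP; rewrite eq_le !ge_max !le_max !lexx !orbT. Qed.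

Lemma addr_eq0_norm (R : realDomainType) (x y : R) :
  `|x| = `|y| -> x * y < 0 -> x + y = 0.
Proof.
move=> /eqP; rewrite eqr_norm2 => /orP[/eqP-> | /eqP->]; last by rewrite addNr.
by rewrite -expr2 ltNge sqr_ge0.
Qed.

Ltac pos_prod :=
  first [ done | (apply: sqr_gt0; done) | (apply: exprn_gt0; pos_prod)
        | (apply: mulr_gt0; pos_prod) ].

Definition pt_opp (t : pt) : pt := let '(a, b, c, d) := t in (- a, - b, - c, - d).

Lemma onS_opp t : onS (pt_opp t) = onS t.
Proof.
case: t => [[[a b] c] d]; rewrite /onS /= -opprD sqrrN !mulrN !mulNr opprK.
by rewrite eqr_opp.
Qed.

Lemma height_opp t : height (pt_opp t) = height t.
Proof. by case: t => [[[a b] c] d]; rewrite /height /= !normrN. Qed.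

Lemma on_lines_opp t : on_lines (pt_opp t) = on_lines t.
Proof. by case: t => [[[a b] c] d]; rewrite /on_lines /= -opprD !oppr_eq0. Qed.

Lemma primitive4_opp t : primitive4 (pt_opp t) = primitive4 t.
Proof. by case: t => [[[a b] c] d]; rewrite /primitive4 /gcdz /= !abszN. Qed.

Lemma primitive4E (a b c d : int) :
  primitive4 (a, b, c, d) = (gcdn `|a| (gcdn `|b| (gcdn `|c| `|d|)) == 1)%N.
Proof. by rewrite /primitive4 /gcdz !absz_nat. Qed.

Lemma NU_normal (R : realType) (B : R) (a b c d : int) : a != 0 ->
  primitive4 (a, b, c, d) -> inU (a, b, c, d) -> (height (a, b, c, d))%:~R <= B ->
  NU_set B (if 0 < a then (a, b, c, d) else pt_opp (a, b, c, d)).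
Proof.
move=> a0 prim tU tB; case: ifP => a_pos.
  by split; [rewrite /projrep prim /first_nonzero_pos a_pos | split].
split; last by rewrite /inU onS_opp on_lines_opp height_opp.
rewrite /projrep primitive4_opp prim /first_nonzero_pos /= oppr_gt0.
by rewrite lt_neqAle a0 leNgt a_pos.
Qed.

Lemma not_on_lines (a b c d : int) :
  a != 0 -> b != 0 -> c != 0 -> d != 0 -> ~~ on_lines (a, b, c, d).
Proof. by move=> /negbTE a0 /negbTE b0 /negbTE c0 /negbTE d0; rewrite /on_lines a0 b0 c0 d0. Qed.

Definition abs_param (q : param) : nparam :=
  let '(v, (s1, s2, s3), (u1, u2, u3), (y1, y2, y3)) := q in
  NParam `|v| `|s1| `|s2| `|s3| `|u1| `|u2| `|u3| `|y1| `|y2| `|y3|.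

Definition pt1 (q : param) : int := let '(v, (s1, _, _), (u1, u2, u3), (y1, _, _)) := q in
  s1 * u1 ^+ 2 * u2 * u3 * v ^+ 2 * y1 ^+ 2.
Definition pt2 (q : param) : int := let '(v, (_, s2, _), (u1, u2, u3), (_, y2, _)) := q in
  s2 * u1 * u2 ^+ 2 * u3 * v ^+ 2 * y2 ^+ 2.
Definition pt5 (q : param) : int := let '(v, (_, _, s3), (u1, u2, u3), (_, _, y3)) := q in
  s3 * u1 * u2 * u3 ^+ 2 * v ^+ 2 * y3 ^+ 2.
Definition pt3 (q : param) : int := let '(v, _, (u1, u2, u3), (y1, y2, y3)) := q in
  u1 ^+ 2 * u2 ^+ 2 * u3 ^+ 2 * v ^+ 3 * y1 * y2 * y3.
Definition pt4 (q : param) : int := let '(_, (s1, s2, s3), _, _) := q in - (s1 * s2 * s3).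

Definition conic_form (q : param) : int :=
  let '(_, (s1, s2, s3), (u1, u2, u3), (y1, y2, y3)) := q in
  s1 * u1 * y1 ^+ 2 + s2 * u2 * y2 ^+ 2 + s3 * u3 * y3 ^+ 2.

Lemma pt_sum_conic v s1 s2 s3 u1 u2 u3 y1 y2 y3 :
  let q := (v, (s1, s2, s3), (u1, u2, u3), (y1, y2, y3)) in
  pt1 q + pt2 q + pt5 q = u1 * u2 * u3 * v ^+ 2 * conic_form q.
Proof. by rewrite /=; ring. Qed.

Lemma pt_prod v s1 s2 s3 u1 u2 u3 y1 y2 y3 :
  let q := (v, (s1, s2, s3), (u1, u2, u3), (y1, y2, y3)) in
  pt1 q * pt2 q * pt5 q =
  s1 * s2 * s3 * (u1 ^+ 2) ^+ 2 * (u2 ^+ 2) ^+ 2 * (u3 ^+ 2) ^+ 2 * (v ^+ 3) ^+ 2 *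
  (y1 * y2 * y3) ^+ 2.
Proof. by rewrite /=; ring. Qed.

Lemma abs_pt q :
  [/\ `|pt1 q| = nt1 (abs_param q), `|pt2 q| = nt2 (abs_param q),
      `|pt5 q| = nt5 (abs_param q), `|pt3 q| = nt3 (abs_param q)
    & `|pt4 q| = nt4 (abs_param q)]%N.
Proof.
case: q => [[[v [[s1 s2] s3]] [[u1 u2] u3]] [[y1 y2] y3]].
by rewrite /= abszN !(abszM, abszX).
Qed.

Lemma abs_pt3_signed q (b : bool) : `|if b then pt3 q else - pt3 q|%N = nt3 (abs_param q).
Proof. by case: b; rewrite ?abszN; case: (abs_pt q). Qed.

Definition pt_of_param (q : param) (b : bool) : pt :=
  (pt1 q, pt2 q, if b then pt3 q else - pt3 q, pt4 q).

Definition param_point (q : param) (b : bool) : pt :=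
  if 0 < pt1 q then pt_of_param q b else pt_opp (pt_of_param q b).

Lemma height_pt_of_param v s u y b : height (pt_of_param (v, s, u, y) b) = Psi v s u y.
Proof.
case: s u y => [[s1 s2] s3] [[u1 u2] u3] [[y1 y2] y3].
by rewrite /height /Psi /=; case: b; rewrite !normrN max4_perm.
Qed.

Definition signed (b : bool) (n : nat) : int := if b then n%:Z else - n%:Z.

Lemma abs_signed b n : `|signed b n|%N = n.
Proof. by case: b; rewrite /signed ?abszN. Qed.

Lemma signed_gt0 b n : (0 < n)%N -> (0 < signed b n) = b.
Proof. by case: b => n0; rewrite /signed ?ltz_nat // oppr_gt0 ltNge ltW // ltz_nat. Qed.

Lemma signed_abs (x : int) : signed (0 < x) `|x|%N = x.
Proof.
rewrite /signed; case: ifP => [/gtz0_abs //|/negbT].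
by rewrite -leNgt abszE => /ler0_norm ->; rewrite opprK.
Qed.

(* For t4 < 0, u1 carries the sign of t2 and u2 that of t1, since
   t1 = u2 * (positive) and t2 = u1 * (positive). *)
Definition param_of_point (t1 t2 t3 t4 : int) : param * bool :=
  let: NParam v s1 s2 s3 u1 u2 u3 y1 y2 y3 :=
    decode `|t1|%N `|t2|%N `|(t1 + t2)%R|%N `|t3|%N `|t4|%N in
  ((v%:Z, (s1%:Z, s2%:Z, s3%:Z), (signed (0 < t2) u1, signed (0 < t1) u2, u3%:Z),
    (y1%:Z, y2%:Z, y3%:Z)), 0 < t3).

Definition point_param (x : pt) : param * bool :=
  let '(t1, t2, t3, t4) := if x.2 < 0 then x else pt_opp x in param_of_point t1 t2 t3 t4.

Lemma point_param_normal t1 t2 t3 t4 (b : bool) : t4 < 0 ->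
  point_param (if b then (t1, t2, t3, t4) else pt_opp (t1, t2, t3, t4)) =
  param_of_point t1 t2 t3 t4.
Proof.
rewrite /point_param => t4_lt0; case: b => /=; first by rewrite t4_lt0.
by rewrite oppr_lt0 ltNge ltW //= !opprK.
Qed.

Definition param_coprime (q : param) : Prop :=
  let '(v, (s1, s2, s3), (u1, u2, u3), (y1, y2, y3)) := q in
  [/\ `|mobiusz (u1 * u2 * u3)| = 1, gcdz (s1 * s2 * s3) (u1 * u2 * u3 * v) = 1%N &
      [/\ [/\ gcdz y1 y2 = 1%N, gcdz y1 y3 = 1%N & gcdz y2 y3 = 1%N] &
          [/\ gcdz y1 (gcdz s2 s3) = 1%N, gcdz y2 (gcdz s1 s3) = 1%N
            & gcdz y3 (gcdz s1 s2) = 1%N]]].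

Lemma param_coprime_local q : npos (abs_param q) ->
  param_coprime q <-> forall p, prime p -> local_ok (nmap (logn p) (abs_param q)).
Proof.
case: q => [[[v [[s1 s2] s3]] [[u1 u2] u3]] [[y1 y2] y3]] /=.
case=> V0 [S1 S2 S3] [U1 U2 U3] [Y1 Y2 Y3].
have S_gt0 : (0 < `|s1| * `|s2| * `|s3|)%N by rewrite !muln_gt0 S1 S2 S3.
have UV_gt0 : (0 < `|u1| * `|u2| * `|u3| * `|v|)%N by rewrite !muln_gt0 U1 U2 U3 V0.
have logS p : logn p (`|s1| * `|s2| * `|s3|) = (logn p `|s1| + logn p `|s2| + logn p `|s3|)%N.
  by rewrite !lognM ?muln_gt0 ?S1 ?S2 ?S3.
have logU p : logn p (`|u1| * `|u2| * `|u3|) = (logn p `|u1| + logn p `|u2| + logn p `|u3|)%N.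
  by rewrite !lognM ?muln_gt0 ?U1 ?U2 ?U3.
have logUV p : logn p (`|u1| * `|u2| * `|u3| * `|v|) =
    (logn p `|u1| + logn p `|u2| + logn p `|u3| + logn p `|v|)%N.
  by rewrite lognM ?logU ?muln_gt0 ?U1 ?U2 ?U3.
rewrite /param_coprime /mobiusz; split=> [[Hm Hg [[H12 H13 H23] [H1 H2 H3]]] p pp | H].
  move/norm_mobius_eq1: Hm => [_ /(_ p pp)]; rewrite !abszM logU => Hm.
  move/gcdz_eq1: Hg; rewrite !abszM => /(gcdn_eq1_logn S_gt0 UV_gt0)/(_ p pp).
  rewrite logS logUV => Hg.
  move/gcdz_eq1/(gcdn_eq1_logn Y1 Y2)/(_ p pp): H12 => H12.
  move/gcdz_eq1/(gcdn_eq1_logn Y1 Y3)/(_ p pp): H13 => H13.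
  move/gcdz_eq1/(gcdn_eq1_logn Y2 Y3)/(_ p pp): H23 => H23.
  move/gcdz_eq1/(gcdn3_eq1_logn Y1 S2 S3)/(_ p pp): H1 => H1.
  move/gcdz_eq1/(gcdn3_eq1_logn Y2 S1 S3)/(_ p pp): H2 => H2.
  move/gcdz_eq1/(gcdn3_eq1_logn Y3 S1 S2)/(_ p pp): H3 => H3.
  by split.
split.
- apply/norm_mobius_eq1; rewrite !abszM; split=> [|p pp]; first by rewrite !muln_gt0 U1 U2 U3.
  by rewrite logU; case: (H p pp).
- apply/gcdz_eq1; rewrite !abszM; apply/(gcdn_eq1_logn S_gt0 UV_gt0) => p pp.
  by rewrite logS logUV; case: (H p pp).
- split; split; apply/gcdz_eq1.
  + by apply/gcdn_eq1_logn => // p /H[_ _ [] ].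
  + by apply/gcdn_eq1_logn => // p /H[_ _ [] ].
  + by apply/gcdn_eq1_logn => // p /H[_ _ [] ].
  + by apply/gcdn3_eq1_logn => // p /H[_ _ _ [] ].
  + by apply/gcdn3_eq1_logn => // p /H[_ _ _ [] ].
  + by apply/gcdn3_eq1_logn => // p /H[_ _ _ [] ].
Qed.

Section ParamToPoint.
Variables (R : realType) (B : R) (v s1 s2 s3 u1 u2 u3 y1 y2 y3 : int).
Let q : param := (v, (s1, s2, s3), (u1, u2, u3), (y1, y2, y3)).
Hypothesis qok : param_ok B q.

Lemma param_ok_nparam : nparam_ok (abs_param q).
Proof.
case: qok => v0 [s10 s20 s30] u30 [y10 y20 y30] [_ _ Hm Hg Hy].
have [+ _] := proj1 (norm_mobius_eq1 _) Hm; rewrite !abszM !muln_gt0 => /andP[/andP[u10 u20] _].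
have qpos : npos (abs_param q) by split; try split => //; rewrite absz_gt0 gt_eqF.
by split=> //; apply/param_coprime_local.
Qed.

Lemma npos_abs_param : npos (abs_param q).
Proof. by case: param_ok_nparam. Qed.

Lemma pt_sum : pt1 q + pt2 q = - pt5 q.
Proof.
case: qok => _ _ _ _ [_ E _ _ _]; apply/eqP; rewrite -addr_eq0.
by rewrite (pt_sum_conic v s1 s2 s3 u1 u2 u3 y1 y2 y3) /conic_form E mulr0.
Qed.

Lemma abs_pt_sum : `|(pt1 q + pt2 q)%R|%N = nt5 (abs_param q).
Proof. by rewrite pt_sum abszN; case: (abs_pt q). Qed.

Lemma pt_neq0 :
  [/\ pt1 q != 0, pt2 q != 0, pt3 q != 0, pt4 q != 0 & pt1 q + pt2 q != 0].
Proof.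
have [P1 P2 P5 P3 P4] := npos_nt npos_abs_param.
have [A1 A2 _ A3 A4] := abs_pt q.
by split; rewrite -absz_gt0 ?abs_pt_sum ?A1 ?A2 ?A3 ?A4.
Qed.

Lemma pt_sign :
  [/\ (0 < pt1 q) = (0 < u2), (0 < pt2 q) = (0 < u1), 0 < pt3 q & pt4 q < 0].
Proof.
case: qok => v0 [s10 s20 s30] u30 [y10 y20 y30] _.
have [_ [_ _ _] [u10 u20 _] _] := npos_abs_param.
move: u10 u20; rewrite !absz_gt0 => u10 u20.
split.
- have -> : pt1 q = u2 * (s1 * u1 ^+ 2 * u3 * v ^+ 2 * y1 ^+ 2) by rewrite /=; ring.
  by rewrite pmulr_lgt0 //; pos_prod.
- have -> : pt2 q = u1 * (s2 * u2 ^+ 2 * u3 * v ^+ 2 * y2 ^+ 2) by rewrite /=; ring.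
  by rewrite pmulr_lgt0 //; pos_prod.
- by rewrite /q /=; pos_prod.
- by rewrite /q /= oppr_lt0; pos_prod.
Qed.

Lemma ultra_abs_param : ultra (nt1 (abs_param q)) (nt2 (abs_param q)) (nt5 (abs_param q)).
Proof.
have [A1 A2 _ _ _] := abs_pt q; rewrite -A1 -A2 -abs_pt_sum.
by have [? ? _ _ ?] := pt_neq0; apply: ultra_addz.
Qed.

Lemma param_point_onS b : onS (pt_of_param q b).
Proof. by rewrite /onS /pt_of_param pt_sum /=; apply/eqP; case: b; ring. Qed.

Lemma param_point_NU b : NU_set B (param_point q b).
Proof.
have [t1n t2n t3n t4n t12n] := pt_neq0.
have [A1 A2 _ _ A4] := abs_pt q.
have qS : onS (pt1 q, pt2 q, if b then pt3 q else - pt3 q, pt4 q) := param_point_onS b.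
have := height_pt_of_param v (s1, s2, s3) (u1, u2, u3) (y1, y2, y3) b.
rewrite /param_point /pt_of_param => Hh; apply: NU_normal => //.
- by rewrite primitive4E A1 A2 A4 abs_pt3_signed (nt_coprime param_ok_nparam ultra_abs_param).
- by rewrite /inU qS not_on_lines //; case: (b); rewrite ?oppr_eq0.
- by rewrite Hh; case: qok => _ _ _ _ [].
Qed.

Lemma param_pointK b : point_param (param_point q b) = (q, b).
Proof.
have [sg1 sg2 t3_gt0 t4_lt0] := pt_sign.
rewrite /param_point /pt_of_param point_param_normal // /param_of_point abs_pt_sum.
have [-> -> _ A3 ->] := abs_pt q.
rewrite abs_pt3_signed (decode_nt param_ok_nparam ultra_abs_param).
case: qok => v0 [s10 s20 s30] u30 [y10 y20 y30] _.
rewrite sg1 sg2 /= !signed_abs !gtz0_abs //.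
by case: b; rewrite /= ?t3_gt0 // oppr_gt0 ltNge ltW.
Qed.

End ParamToPoint.

Section PointToParam.
Variables (R : realType) (B : R) (t1 t2 t3 t4 : int).
Hypotheses (t4_lt0 : t4 < 0) (t1_neq0 : t1 != 0) (t2_neq0 : t2 != 0) (t3_neq0 : t3 != 0)
  (t12_neq0 : t1 + t2 != 0) (tS : onS (t1, t2, t3, t4))
  (tprim : gcdn `|t1| (gcdn `|t2| (gcdn `|t3| `|t4|)) = 1%N)
  (tB : (height (t1, t2, t3, t4))%:~R <= B).

Let d := decode `|t1|%N `|t2|%N `|(t1 + t2)%R|%N `|t3|%N `|t4|%N.
Let q := (param_of_point t1 t2 t3 t4).1.

Lemma decode_point :
  nparam_ok d /\ [/\ nt1 d = `|t1|, nt2 d = `|t2|, nt5 d = `|(t1 + t2)%R|,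
                     nt3 d = `|t3| & nt4 d = `|t4|]%N.
Proof.
have t4_neq0 : t4 != 0 by rewrite lt_eqF.
have prodE : (`|t1| * `|t2| * `|(t1 + t2)%R| = `|t3| ^ 2 * `|t4|)%N.
  by rewrite -abszX -!abszM (eqP tS).
have Tultra := ultra_addz t1_neq0 t2_neq0 t12_neq0.
by split; [apply: decode_ok | apply: nt_decode]; rewrite ?absz_gt0.
Qed.

Lemma param_of_point1E : q = ((nv d)%:Z, ((ns1 d)%:Z, (ns2 d)%:Z, (ns3 d)%:Z),
  (signed (0 < t2) (nu1 d), signed (0 < t1) (nu2 d), (nu3 d)%:Z),
  ((ny1 d)%:Z, (ny2 d)%:Z, (ny3 d)%:Z)).
Proof. by rewrite /q /param_of_point -/d; case: d. Qed.

Lemma abs_param_of_point : abs_param q = d.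
Proof. by rewrite param_of_point1E /= !abs_signed. Qed.

Lemma param_of_point_pos :
  [/\ 0 < (nv d)%:Z, [/\ 0 < (ns1 d)%:Z, 0 < (ns2 d)%:Z & 0 < (ns3 d)%:Z],
      [/\ signed (0 < t2) (nu1 d) != 0, signed (0 < t1) (nu2 d) != 0 & 0 < (nu3 d)%:Z] &
      [/\ 0 < (ny1 d)%:Z, 0 < (ny2 d)%:Z & 0 < (ny3 d)%:Z]].
Proof.
have := decode_pos `|t1|%N `|t2|%N `|(t1 + t2)%R|%N `|t3|%N `|t4|%N; rewrite -/d.
case: d => v s1 s2 s3 u1 u2 u3 y1 y2 y3 [V0 [S1 S2 S3] [U1 U2 U3] [Y1 Y2 Y3]] /=.
by rewrite -!absz_gt0 !abs_signed !ltz_nat.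
Qed.

Lemma pt_param_of_point :
  [/\ pt1 q = t1, pt2 q = t2, pt3 q = `|t3|%N & pt4 q = t4].
Proof.
have [_ [E1 E2 _ E3 E4]] := decode_point.
have [A1 A2 _ A3 A4] := abs_pt q; rewrite abs_param_of_point in A1 A2 A3 A4.
rewrite E1 in A1; rewrite E2 in A2; rewrite E3 in A3; rewrite E4 in A4.
have [V0 [S1 S2 S3] [U1 U2 U3] [Y1 Y2 Y3]] := param_of_point_pos.
have [_ [_ _ _] [U1' U2' _] _] := decode_pos `|t1|%N `|t2|%N `|(t1 + t2)%R|%N `|t3|%N `|t4|%N.
split.
- rewrite -(signed_abs (pt1 q)) -(signed_abs t1) A1; congr signed.
  have -> : pt1 q = signed (0 < t1) (nu2 d) *
      ((ns1 d)%:Z * signed (0 < t2) (nu1 d) ^+ 2 * (nu3 d)%:Z * (nv d)%:Z ^+ 2 * (ny1 d)%:Z ^+ 2).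
    by rewrite param_of_point1E /=; ring.
  by rewrite pmulr_lgt0 ?signed_gt0 //; pos_prod.
- rewrite -(signed_abs (pt2 q)) -(signed_abs t2) A2; congr signed.
  have -> : pt2 q = signed (0 < t2) (nu1 d) *
      ((ns2 d)%:Z * signed (0 < t1) (nu2 d) ^+ 2 * (nu3 d)%:Z * (nv d)%:Z ^+ 2 * (ny2 d)%:Z ^+ 2).
    by rewrite param_of_point1E /=; ring.
  by rewrite pmulr_lgt0 ?signed_gt0 //; pos_prod.
- by rewrite -A3 gtz0_abs // param_of_point1E /=; pos_prod.
- have pt4_lt0 : pt4 q < 0 by rewrite param_of_point1E /= oppr_lt0; pos_prod.
  by apply/eqP; rewrite -eqr_opp -!ltz0_abs // A4.
Qed.

Lemma pt_of_param_of_point : pt_of_param q (0 < t3) = (t1, t2, t3, t4).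
Proof.
rewrite /pt_of_param; have [-> -> -> ->] := pt_param_of_point.
by rewrite -[in RHS](signed_abs t3).
Qed.

Lemma conic_of_point : conic_form q = 0.
Proof.
have [P1 P2 _ _] := pt_param_of_point.
have [V0 [S1 S2 S3] [U1 U2 U3] [Y1 Y2 Y3]] := param_of_point_pos.
have [_ [_ _ E5 _ _]] := decode_point.
have [_ _ A5 _ _] := abs_pt q; rewrite abs_param_of_point E5 in A5.
have sum0 : t1 + t2 + pt5 q = 0.
  apply: addr_eq0_norm; first by rewrite -!abszE A5.
  have neg : t1 * t2 * (t1 + t2) < 0 by rewrite (eqP tS) pmulr_rlt0 // sqr_gt0.
  have pos : 0 < t1 * t2 * pt5 q by rewrite -P1 -P2 param_of_point1E pt_prod; pos_prod.
  have : t1 * t2 * (t1 + t2) * (t1 * t2 * pt5 q) < 0 by rewrite pmulr_llt0.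
  have -> : t1 * t2 * (t1 + t2) * (t1 * t2 * pt5 q) =
    (t1 * t2) ^+ 2 * ((t1 + t2) * pt5 q) by ring.
  by rewrite pmulr_rlt0 // sqr_gt0 // mulf_neq0.
move: sum0; rewrite -P1 -P2 param_of_point1E pt_sum_conic => /eqP.
by rewrite !mulf_eq0 (negbTE U1) (negbTE U2) (gt_eqF U3) (gt_eqF V0) => /eqP.
Qed.

Lemma param_of_point_ok : param_ok B q.
Proof.
have [V0 [S1 S2 S3] [_ _ U3] [Y1 Y2 Y3]] := param_of_point_pos.
have qpos : npos (abs_param q) by rewrite abs_param_of_point; apply: decode_pos.
have /(param_coprime_local qpos) Hco : forall p, prime p -> local_ok (nmap (logn p) (abs_param q)).
  by rewrite abs_param_of_point; case: decode_point => [[]].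
have Hh := height_pt_of_param (nv d)%:Z ((ns1 d)%:Z, (ns2 d)%:Z, (ns3 d)%:Z)
  (signed (0 < t2) (nu1 d), signed (0 < t1) (nu2 d), (nu3 d)%:Z)
  ((ny1 d)%:Z, (ny2 d)%:Z, (ny3 d)%:Z) (0 < t3).
rewrite -param_of_point1E pt_of_param_of_point in Hh.
move: Hco conic_of_point; rewrite param_of_point1E => -[Hm Hg Hy] Hc.
by split=> //; split; rewrite -?Hh.
Qed.

Lemma param_of_pointK :
  param_point q (0 < t3) = if 0 < t1 then (t1, t2, t3, t4) else pt_opp (t1, t2, t3, t4).
Proof.
have [P1 _ _ _] := pt_param_of_point.
by rewrite /param_point P1 pt_of_param_of_point.
Qed.

Lemma param_of_point_spec :
  let p := param_of_point t1 t2 t3 t4 in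
  param_ok B p.1 /\
  param_point p.1 p.2 = if 0 < t1 then (t1, t2, t3, t4) else pt_opp (t1, t2, t3, t4).
Proof.
split; first exact: param_of_point_ok.
have -> : (param_of_point t1 t2 t3 t4).2 = (0 < t3) by rewrite /param_of_point; case: decode.
exact: param_of_pointK.
Qed.

End PointToParam.

Lemma NU_nonzero (R : realType) (B : R) a b c d : NU_set B (a, b, c, d) ->
  [/\ 0 < a, b != 0, c != 0, d != 0 & a + b != 0].
Proof.
case=> /andP[_ fnz] [/andP[/eqP tS nl] _].
have [c0 d0] : c != 0 /\ d != 0.
  split; apply: contraNneq nl => cd0; move: tS; rewrite cd0 ?expr0n ?mul0r ?mulr0 => /eqP;
  by rewrite !mulf_eq0 => /orP[/orP[]|] /eqP ab0; rewrite /on_lines ab0 ?eqxx ?orbT.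
have : a * b * (a + b) != 0 by rewrite tS mulf_neq0 // expf_neq0.
rewrite !mulf_eq0 !negb_or => /andP[/andP[a0 b0] ab0]; split=> //.
by move: fnz; rewrite /first_nonzero_pos (negbTE a0) orbF.
Qed.

Lemma point_paramK (R : realType) (B : R) x : NU_set B x ->
  param_ok B (point_param x).1 /\ param_point (point_param x).1 (point_param x).2 = x.
Proof.
case: x => [[[a b] c] d] Hx; have [a_gt0 b0 c0 d0 ab0] := NU_nonzero Hx.
case: Hx => /andP[prim _] [/andP[tS _] tB].
move: prim; rewrite primitive4E => /eqP tprim.
have [d_gt0|d_lt0|/eqP] := ltrgt0P d; last by rewrite (negbTE d0).
  have -> : point_param (a, b, c, d) = param_of_point (- a) (- b) (- c) (- d).
    rewrite -(@point_param_normal (- a) (- b) (- c) (- d) false) ?oppr_lt0 //=.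
    by rewrite !opprK.
  have nS : onS (- a, - b, - c, - d).
    by rewrite -[(- a, _, _, _)]/(pt_opp (a, b, c, d)) onS_opp.
  have nB : (height (- a, - b, - c, - d))%:~R <= B.
    by rewrite -[(- a, _, _, _)]/(pt_opp (a, b, c, d)) height_opp.
  have nprim : gcdn `|- a| (gcdn `|- b| (gcdn `|- c| `|- d|)) = 1%N by rewrite !abszN.
  have n4 : - d < 0 by rewrite oppr_lt0.
  have [n1 n2 n3 n12] : [/\ - a != 0, - b != 0, - c != 0 & - a + - b != 0].
    by rewrite -opprD !oppr_eq0 (lt0r_neq0 a_gt0); split.
  have [ok E] := param_of_point_spec n4 n1 n2 n3 n12 nS nprim nB.
  by split=> //; rewrite E oppr_gt0 ltNge ltW //= !opprK.
have -> : point_param (a, b, c, d) = param_of_point a b c d :=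
  @point_param_normal a b c d true d_lt0.
have [ok E] := param_of_point_spec d_lt0 (lt0r_neq0 a_gt0) b0 c0 ab0 tS tprim tB.
by rewrite a_gt0 in E.
Qed.

Lemma param_pointP (R : realType) (B : R) q b : param_set B q ->
  NU_set B (param_point q b) /\ point_param (param_point q b) = (q, b).
Proof.
case: q => [[[v [[s1 s2] s3]] [[u1 u2] u3]] [[y1 y2] y3]] qok.
by split; [apply: (param_point_NU qok) | apply: (param_pointK qok)].
Qed.

(** * Counting *)

Lemma int_in_box (K : nat) (z : int) : `|z| < K%:Z ->
  exists i : 'I_(2 * K).+1, (i : nat)%:Z - K%:Z = z.
Proof.
rewrite ltr_norml => /andP[zlo zhi].
have zK : (`|(z + K%:Z)%R| < (2 * K).+1)%N by lia.
exists (Ordinal zK) => /=; rewrite gez0_abs ?addrK //; lia.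
Qed.

Lemma finite_height_le (R : realType) (B : R) :
  finite_set [set t : pt | (height t)%:~R <= B].
Proof.
set K := (Num.truncn B).+1; have BK : B < K%:R := truncnS_gt B.
pose f (i : 'I_(2 * K).+1) : int := (i : nat)%:Z - K%:Z.
pose g (i : 'I_(2 * K).+1 * 'I_(2 * K).+1 * 'I_(2 * K).+1 * 'I_(2 * K).+1) : pt :=
  let '(i1, i2, i3, i4) := i in (f i1, f i2, f i3, f i4).
apply: (@sub_finite_set _ _ (g @` setT)%classic); last exact: finite_image.
case=> [[[a b] c] d] /= hB.
have : height (a, b, c, d) < K%:Z by rewrite -(ltr_int R); apply: le_lt_trans hB BK.
rewrite /height !gt_max => /and4P[/int_in_box[i1 <-] /int_in_box[i2 <-]].
by move=> /int_in_box[i3 <-] /int_in_box[i4 <-]; exists (i1, i2, i3, i4).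
Qed.

Local Open Scope classical_set_scope.
Local Open Scope fset_scope.

Lemma card_fset_set_double (T U : choiceType) (S : set T) (A : set U)
    (g : U -> bool -> T) (h : T -> U * bool) : finite_set S ->
  (forall a b, A a -> S (g a b) /\ h (g a b) = (a, b)) ->
  (forall x, S x -> A (h x).1 /\ g (h x).1 (h x).2 = x) ->
  finite_set A /\ #|` fset_set S| = (2 * #|` fset_set A|)%N.
Proof.
move=> finS gK hK.
have finA : finite_set A.
  apply: (sub_finite_set _ (finite_image (fun x => (h x).1) finS)) => a Aa.
  by exists (g a true); [exact: (gK _ _ Aa).1 | rewrite (gK _ _ Aa).2].
split=> //.
have -> : S = (g ^~ true @` A `|` g ^~ false @` A)%classic.
  apply/seteqP; split=> [x Sx | x [[a Aa <-]|[a Aa <-]]]; last 2 first.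
  - exact: (gK _ _ Aa).1.
  - exact: (gK _ _ Aa).1.
  have [Ah ghx] := hK x Sx.
  by case E: (h x).2 ghx => ghx; [left | right]; exists (h x).1.
rewrite fset_setU; [|exact: finite_image..].
rewrite !fset_set_image //.
have gK' b a : a \in fset_set A -> h (g a b) = (a, b).
  by rewrite in_fset_set // inE => /(gK a b)[].
have := cardfsUI (g ^~ true @` fset_set A) (g ^~ false @` fset_set A).
have -> : (g ^~ true @` fset_set A) `&` (g ^~ false @` fset_set A) = fset0.
  apply/fsetP => x; rewrite !inE; apply/negP => /andP[/imfsetP[a Aa ->] /imfsetP[a' Aa']].
  by move/(congr1 h); rewrite (gK' _ _ Aa) (gK' _ _ Aa').
rewrite cardfs0 addn0 => ->.
rewrite !card_in_imfset ?mul2n ?addnn // => a a' Aa Aa' /(congr1 h);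
  by rewrite (gK' _ _ Aa) (gK' _ _ Aa') => -[].
Qed.

Theorem lemma4p4 (R : realType) (B : R) :
  [/\ finite_set (NU_set B), finite_set (param_set B) &
      #|` fset_set (NU_set B)| = (2 * #|` fset_set (param_set B)|)%N].
Proof.
have finNU : finite_set (NU_set B).
  by apply: sub_finite_set (finite_height_le B) => x [_ []].
have [finP cardNU] := card_fset_set_double finNU (@param_pointP R B) (@point_paramK R B).
by split.
Qed.
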